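(* Let $V$ be a finite nonempty set and $f:\{0,1\}^V\to\{0,1\}^V$. (1) $f$ is positive-circular if and only if $f$ is even-self-dual and non-expansive. (2) $f$ is negative-circular if and only if $f$ is odd-self-dual and non-expansive.
   Context: For $x,y\in\{0,1\}^V$, $x\oplus y$ is componentwise addition mod 2, $1$ is the all-ones point, $\|x\|$ is the number of $1$s of $x$, $d(x,y)=\|x\oplus y\|$; $x$ is even (odd) if $\|x\|$ is even (odd). $f$ is non-expansive if $d(f(x),f(y))\le d(x,y)$ for all $x,y$. The conjugate is $\tilde f(x)=f(x)\oplus x$. $f$ is self-dual if $f(x\oplus1)=f(x)\oplus1$ for all $x$; even (odd) if $\tilde f(\{0,1\}^V)$ is exactly the set of even (odd) points; even-self-dual (odd-self-dual) if both even (odd) and self-dual. For $x^{j\alpha}$ the point equal to $x$ except its $j$-component is $\alpha$, the global interaction graph $G(f)$ is the signed digraph on $V$ with a positive (resp. negative) arc from $j$ to $i$ iff $f_i(x^{j1})-f_i(x^{j0})=1$ (resp. $=-1$) for at least one $x$ (so there may be both a positive and a negative arc from $j$ to $i$; loops allowed). A cycle is a subgraph with at most one arc between any ordered pair of vertices whose underlying unsigned digraph is a directed cycle; it is positive (negative) if it has an even (odd) number of negative arcs. $f$ is positive-circular (negative-circular) if $G(f)$ itself is a positive (negative) cycle (passing through all vertices of $V$). *)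

From mathcomp Require Import all_boot.
Set Implicit Arguments. Unset Strict Implicit. Unset Printing Implicit Defensive.

Section BoolNet.
Variable V : finType.

Definition point := {ffun V -> bool}.

Definition pxor (x y : point) : point := [ffun i => x i (+) y i].
Definition pone : point := [ffun _ => true].
Definition weight (x : point) : nat := #|[set i | x i]|.
Definition hdist (x y : point) : nat := weight (pxor x y).
Definition even_point (x : point) : bool := ~~ odd (weight x).
Definition odd_point (x : point) : bool := odd (weight x).

Definition non_expansive (f : point -> point) : Prop :=
  forall x y, hdist (f x) (f y) <= hdist x y.

Definition conjugate (f : point -> point) (x : point) : point := pxor (f x) x.

Definition self_dual (f : point -> point) : Prop :=
  forall x, f (pxor x pone) = pxor (f x) pone.

Definition even_map (f : point -> point) : Prop :=
  [set conjugate f x | x in [set: point]] = [set y : point | even_point y].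
Definition odd_map (f : point -> point) : Prop :=
  [set conjugate f x | x in [set: point]] = [set y : point | odd_point y].

Definition even_self_dual f := even_map f /\ self_dual f.
Definition odd_self_dual f := odd_map f /\ self_dual f.

Definition setc (x : point) (j : V) (a : bool) : point :=
  [ffun k => if k == j then a else x k].

(* arcs of the global interaction graph G(f), from j to i *)
Definition pos_arc (f : point -> point) (j i : V) : bool :=
  [exists x : point, f (setc x j true) i && ~~ f (setc x j false) i].
Definition neg_arc (f : point -> point) (j i : V) : bool :=
  [exists x : point, ~~ f (setc x j true) i && f (setc x j false) i].
Definition arc f j i := pos_arc f j i || neg_arc f j i.

(* G(f) itself is a cycle through all vertices: at most one arc per ordered
   pair, and the underlying unsigned digraph is a directed (Hamiltonian)
   cycle, i.e. the functional graph of a successor map with a single orbit. *)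
Definition is_cycle_graph (f : point -> point) : Prop :=
  (forall j i, ~~ (pos_arc f j i && neg_arc f j i)) /\
  exists s : V -> V,
    (forall j i, arc f j i <-> i = s j) /\
    (forall i j, exists k, iter k s i = j).

Definition num_neg_arcs (f : point -> point) : nat :=
  #|[set p : V * V | neg_arc f p.1 p.2]|.

Definition positive_circular f := is_cycle_graph f /\ ~~ odd (num_neg_arcs f).
Definition negative_circular f := is_cycle_graph f /\ odd (num_neg_arcs f).

End BoolNet.

From Pilot Require Import Defs.
From mathcomp Require Import all_boot zify.
Set Implicit Arguments. Unset Strict Implicit. Unset Printing Implicit Defensive.

(* Self-duality turns non-expansiveness into distance preservation, since
   d(x, y) + d(y, x + 1) = |V|, and the isometries of the cube are the maps
   f(x)_{s j} = x_j + c_{s j} with s a permutation.  Conversely, if G(f) is a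
   cycle then f_i depends only on its unique in-neighbour, which gives f the
   same shape.  For such f, G(f) is the functional graph of s with negative
   arcs exactly where c is 1, and the conjugate has constant parity par c.
   When s is a single cycle, the conjugate is injective on {x | x_i0 = 0}, so
   it fills the whole parity class.  When s is not, some s-closed set S
   contains i but not j; the S-parity of the conjugate is constant, yet the
   parity class contains two points whose S-parities differ by e_i + e_j. *)

Section BooleanCube.
Variable V : finType.
Implicit Types (x y z : point V) (f : point V -> point V) (s : V -> V).

Definition pzero : point V := [ffun _ => false].
Definition pdelta (k : V) : point V := [ffun j => j == k].
Definition parity_on (P : pred V) x := \big[addb/false]_(k | P k) x k.

Lemma parity_onD P x y :
  parity_on P (pxor x y) = parity_on P x (+) parity_on P y.
Proof. by rewrite /parity_on -big_split; apply: eq_bigr => i _; rewrite ffunE. Qed.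

Lemma parity_on_delta P k : parity_on P (pdelta k) = P k.
Proof.
case Pk: (P k).
  rewrite /parity_on (bigD1 k) //= ffunE eqxx big1 // => m /andP[_ mk].
  by rewrite ffunE (negbTE mk).
rewrite /parity_on big1 // => m Pm; rewrite ffunE; apply/eqP => mk.
by rewrite -mk Pm in Pk.
Qed.

Lemma odd_weight x : odd (weight x) = parity_on predT x.
Proof.
rewrite /weight -sum1_card big_mkcond (big_morph odd oddD (erefl (odd 0))).
by apply: eq_bigr => i _; rewrite inE; case: (x i).
Qed.

Lemma parity_setc0 x i :
  parity_on predT x = x i (+) parity_on predT (setc x i false).
Proof.
rewrite /parity_on (bigD1 i) // [in RHS](bigD1 i) //= ffunE eqxx /=.
by congr (_ (+) _); apply: eq_bigr => j ji; rewrite ffunE (negbTE ji).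
Qed.

Lemma even_pointsE :
  [set y : point V | even_point y] = [set y | parity_on predT y == false].
Proof. by apply/setP => y; rewrite !inE /even_point odd_weight; case: parity_on. Qed.

Lemma odd_pointsE :
  [set y : point V | odd_point y] = [set y | parity_on predT y == true].
Proof. by apply/setP => y; rewrite !inE /odd_point odd_weight; case: parity_on. Qed.

(* A point of a parity class is determined by its coordinates other than [i0]. *)
Lemma card_parity_class_le i0 b :
  #|[set y : point V | parity_on predT y == b]| <= #|[set x : point V | ~~ x i0]|.
Proof.
have inj : {in [set y | parity_on predT y == b] &,
             injective (fun y => setc y i0 false)}.
  move=> y y'; rewrite !inE => /eqP py /eqP py' /= yy'.
  apply/ffunP => k; case: (eqVneq k i0) => [->|ki0]; last first.
    by move/ffunP: yy' => /(_ k); rewrite !ffunE (negbTE ki0).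
  move: (parity_setc0 y i0) (parity_setc0 y' i0); rewrite yy' py py'.
  by clear py py'; case: b; case: (y i0); case: (y' i0); case: parity_on.
rewrite -(card_in_imset inj); apply: subset_leq_card.
by apply/subsetP => _ /imsetP[y _ ->]; rewrite inE ffunE eqxx.
Qed.

Lemma hdistE x y : hdist x y = #|[set i | x i != y i]|.
Proof.
rewrite /hdist /weight; apply: eq_card => i; rewrite !inE ffunE.
by case: (x i); case: (y i).
Qed.

Lemma hdist_complement x y : hdist x y + hdist y (pxor x (pone V)) = #|V|.
Proof.
rewrite !hdistE -(cardsC [set i | x i != y i]); congr (_ + _).
by apply: eq_card => i; rewrite !inE !ffunE; case: (x i); case: (y i).
Qed.

Lemma hdist_pxor2r x y z : hdist (pxor x z) (pxor y z) = hdist x y.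
Proof.
rewrite !hdistE; apply: eq_card => i; rewrite !inE !ffunE.
by case: (x i); case: (y i); case: (z i).
Qed.

Lemma weightE x : weight x = hdist x pzero.
Proof. by rewrite hdistE /weight; apply: eq_card => i; rewrite !inE ffunE; case: (x i). Qed.

Lemma weight_gt0 x k : x k -> 0 < weight x.
Proof. by move=> xk; rewrite /weight (cardsD1 k) inE xk. Qed.

Lemma weight_delta k : weight (pdelta k) = 1.
Proof.
rewrite /weight (_ : [set i | pdelta k i] = [set k]) ?cards1 //.
by apply/setP => i; rewrite !inE ffunE.
Qed.

Lemma hdist_delta x k :
  hdist x (pdelta k) = if x k then (weight x).-1 else (weight x).+1.
Proof.
rewrite hdistE /weight; case: ifP => xk.
  rewrite (cardsD1 k [set i | x i]) inE xk add1n /=.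
  apply: eq_card => i; rewrite !inE ffunE.
  by case: (eqVneq i k) => [->|ik]; rewrite ?xk //=; case: (x i).
transitivity #|k |: [set i | x i]|; last by rewrite cardsU1 inE xk.
apply: eq_card => i; rewrite !inE ffunE.
by case: (eqVneq i k) => [->|ik]; rewrite ?xk //=; case: (x i).
Qed.

Definition cube_isometry f := forall x y, hdist (f x) (f y) = hdist x y.

Lemma self_dual_non_expansive_isometry f :
  self_dual f -> non_expansive f -> cube_isometry f.
Proof.
move=> sd ne x y.
have := ne x y; have := ne y (pxor x (pone V)); rewrite sd.
have := hdist_complement x y; have := hdist_complement (f x) (f y); lia.
Qed.

Definition perm_xor_map f s (c : point V) :=
  injective s /\ forall x j, f x (s j) = x j (+) c (s j).

Definition single_orbit s := forall i j, exists k, iter k s i = j.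

(* After translating [f pzero] to the origin, [f] preserves weights, so it maps
   each unit vector to a unit vector [pdelta (s j)]; comparing distances to
   that unit vector then pins down coordinate [s j] of every image. *)
Lemma cube_isometry_perm_xor f :
  cube_isometry f -> exists s c, perm_xor_map f s c.
Proof.
move=> iso; pose c := f pzero; pose g x := pxor (f x) c.
have g_iso x y : hdist (g x) (g y) = hdist x y by rewrite hdist_pxor2r iso.
have g0 : g pzero = pzero by apply/ffunP => i; rewrite !ffunE addbb.
have weight_g x : weight (g x) = weight x by rewrite !weightE -{1}g0 g_iso.
pose s j := odflt j [pick k | g (pdelta j) k].
have g_delta j : g (pdelta j) = pdelta (s j).
  have /cards1P[k0 Ek0] : #|[set i | g (pdelta j) i]| == 1.
    by have := weight_g (pdelta j); rewrite weight_delta /weight => ->.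
  move/setP: Ek0 => gk0; rewrite /s; case: pickP => [k gk|none] /=.
    move: (gk0 k); rewrite !inE gk => /esym/eqP kk0; subst k0.
    by apply/ffunP => i; rewrite [RHS]ffunE -in_set1 -gk0 inE.
  by move: (gk0 k0); rewrite !inE none eqxx.
have g_s x j : g x (s j) = x j.
  have := g_iso x (pdelta j); rewrite g_delta !hdist_delta weight_g.
  case xj: (x j); case gj: (g x (s j)) => //.
    by have := weight_gt0 xj; lia.
  by have := weight_gt0 gj; rewrite weight_g; lia.
exists s, c; split.
  move=> j1 j2 sj; move: (g_s (pdelta j1) j2).
  by rewrite -sj g_s !ffunE eqxx => /esym/eqP.
by move=> x j; rewrite -(g_s x j) ffunE -addbA addbb addbF.
Qed.

Section PermXor.
Variables (f : point V -> point V) (s : V -> V) (c : point V).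
Hypothesis fF : perm_xor_map f s c.
Let s_inj : injective s := fF.1.
Let f_s : forall x j, f x (s j) = x j (+) c (s j) := fF.2.

Lemma perm_xorE x i : f x i = x (invF s_inj i) (+) c i.
Proof. by have := f_s x (invF s_inj i); rewrite f_invF. Qed.

Lemma perm_xor_self_dual : self_dual f.
Proof.
move=> x; apply/ffunP => i; rewrite !ffunE !perm_xorE !ffunE.
by case: (x _); case: (c i).
Qed.

Lemma perm_xor_non_expansive : non_expansive f.
Proof.
move=> x y; rewrite !hdistE.
rewrite (_ : [set i | f x i != f y i] = s @: [set j | x j != y j]).
  by rewrite card_imset.
apply/setP => i; rewrite inE -{1 2 3}(f_invF s_inj i) (mem_imset _ _ s_inj) inE !f_s.
by case: (x _); case: (y _); case: (c _).
Qed.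

Lemma parity_on_perm_xor (P : pred V) x :
  (forall k, P (s k) = P k) -> parity_on P (f x) = parity_on P x (+) parity_on P c.
Proof.
move=> Ps; rewrite /parity_on (reindex_inj s_inj) /=.
rewrite (eq_big P (fun j => x j (+) c (s j)) Ps (fun j _ => f_s x j)) big_split /=.
congr (_ (+) _); rewrite [in RHS](reindex_inj s_inj) /=.
by apply: eq_big => // k; rewrite Ps.
Qed.

Lemma parity_on_conjugate (P : pred V) x :
  (forall k, P (s k) = P k) -> parity_on P (conjugate f x) = parity_on P c.
Proof.
by move=> Ps; rewrite parity_onD parity_on_perm_xor //; case: parity_on; case: parity_on.
Qed.

(* [conjugate f x] records the differences x_j + x_{s j} (up to c), which
   determine x along the orbit of i0 once x i0 is known. *)
Lemma conjugate_inj_on (i0 : V) :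
  single_orbit s -> {in [set x : point V | ~~ x i0] &, injective (conjugate f)}.
Proof.
move=> orb x y; rewrite !inE => xi0 yi0 fxy.
have step j : x j (+) y j = x (s j) (+) y (s j).
  move/ffunP: fxy => /(_ (s j)); rewrite !ffunE !f_s.
  by case: (x j); case: (y j); case: (x (s j)); case: (y (s j)); case: (c (s j)).
have along k : x (iter k s i0) = y (iter k s i0).
  elim: k => [|k IH]; first by move: xi0 yi0; case: (x i0); case: (y i0).
  by move: (step (iter k s i0)); rewrite iterS IH addbb; case: (x _); case: (y _).
by apply/ffunP => j; have [k <-] := orb i0 j.
Qed.

Lemma conjugate_image (i0 : V) : single_orbit s ->
  [set conjugate f x | x in [set: point V]]
  = [set y | parity_on predT y == parity_on predT c].
Proof.
move=> orb; apply/eqP; rewrite eqEcard; apply/andP; split.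
  by apply/subsetP => _ /imsetP[x _ ->]; rewrite inE parity_on_conjugate.
apply: leq_trans (card_parity_class_le i0 _) _.
rewrite -(card_in_imset (conjugate_inj_on orb)); apply: subset_leq_card.
by apply/subsetP => _ /imsetP[x _ ->]; rewrite imset_f.
Qed.

Lemma single_orbit_of_image b :
  [set conjugate f x | x in [set: point V]] = [set y | parity_on predT y == b] ->
  single_orbit s.
Proof.
move=> img i j.
suff ij : fconnect s i j by exists (findex s i j); apply: iter_findex.
apply: contraT => nij.
pose S := [pred k | fconnect s i k].
have Ss k : S (s k) = S k.
  apply/idP/idP => ik; last exact: connect_trans ik (fconnect1 s k).
  by apply: connect_trans ik _; rewrite fconnect_sym // fconnect1.
pose u : point V := [ffun k => b && (k == i)].
have u_par : parity_on predT u = b.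
  rewrite /u; case: (b); last by rewrite /parity_on big1 // => k _; rewrite ffunE.
  rewrite -[RHS](parity_on_delta predT i).
  by congr parity_on; apply/ffunP => k; rewrite !ffunE.
have in_img w : parity_on predT w = b -> parity_on S w = parity_on S c.
  move=> wb; have : w \in [set conjugate f x | x in [set: point V]] by rewrite img inE wb.
  by case/imsetP => x _ ->; apply: parity_on_conjugate.
have := in_img _ u_par; have := in_img (pxor (pxor u (pdelta i)) (pdelta j)).
rewrite !parity_onD !parity_on_delta u_par /S /= connect0 (negbTE nij).
rewrite !addbT addbF negbK => /(_ erefl) <-.
by case: parity_on.
Qed.

End PermXor.

Lemma single_orbit_inj s : single_orbit s -> injective s.
Proof.
move=> orb.
have s_surj i : i \in codom s.
  have [[|k] sk] := orb (s i) i; first by rewrite -sk /= codom_f.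
  by rewrite -sk iterS codom_f.
have s_inj : {in predT &, injective s}.
  apply/image_injP/eqP; apply: eq_card => i.
  by have /codomP[j ->] := s_surj i; rewrite image_f.
by move=> a b; apply: s_inj.
Qed.

Lemma setc_no_arc f j i x b b' :
  ~~ Defs.arc f j i -> f (setc x j b) i = f (setc x j b') i.
Proof.
rewrite /Defs.arc negb_or => /andP[/existsPn/(_ x) np /existsPn/(_ x) nn].
move: np nn.
by case: b; case: b'; case: (f (setc x j true) i); case: (f (setc x j false) i).
Qed.

Lemma no_arc_locality f i p :
  (forall j, j != p -> ~~ Defs.arc f j i) ->
  forall x y, x p = y p -> f x i = f y i.
Proof.
move=> noarc x y xyp.
suff local (r : seq V) : forall x,
    p \notin r -> (forall k, k \notin r -> x k = y k) -> f x i = f y i.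
  apply: (local [seq k <- enum V | k != p]); first by rewrite mem_filter eqxx.
  by move=> k; rewrite mem_filter mem_enum andbT => /negPn/eqP ->.
elim: r => [|j r IH] z pr zr.
  by congr (f _ i); apply/ffunP => k; exact: zr.
move: pr; rewrite in_cons negb_or => /andP[pj pr].
rewrite (_ : z = setc z j (z j)); last first.
  by apply/ffunP => k; rewrite ffunE; case: eqP => // ->.
rewrite (setc_no_arc _ _ (y j) (noarc _ _)) 1?eq_sym //.
apply: IH => // k kr; rewrite ffunE; case: eqP => [->//|kj].
by apply: zr; rewrite in_cons negb_or kr andbT; apply/eqP.
Qed.

Lemma unique_arc_xor f i p :
  (forall j, j != p -> ~~ Defs.arc f j i) -> Defs.arc f p i ->
  forall x, f x i = x p (+) f pzero i.
Proof.
move=> noarc arc_p.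
have loc := no_arc_locality noarc.
have flip : f (setc pzero p true) i = ~~ f pzero i.
  have [x0 fx0] : exists x0, f (setc x0 p true) i != f (setc x0 p false) i.
    by case/orP: arc_p => /existsP[x0 /andP[h1 h0]];
      exists x0; move: h1 h0; case: (f _ i); case: (f _ i).
  rewrite (loc _ (setc x0 p true)); last by rewrite !ffunE eqxx.
  rewrite (loc pzero (setc x0 p false)); last by rewrite !ffunE eqxx.
  by move: fx0; case: (f _ i); case: (f _ i).
move=> x; case xp: (x p).
  by rewrite (loc x (setc pzero p true)) ?flip // ffunE eqxx.
by rewrite (loc x pzero) // ffunE.
Qed.

Lemma cycle_graph_perm_xor f :
  is_cycle_graph f -> exists s c, perm_xor_map f s c /\ single_orbit s.
Proof.
case=> _ [s [arcs orb]]; have s_inj := single_orbit_inj orb.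
exists s, (f pzero); split=> //; split=> // x j.
apply: (unique_arc_xor (p := j)); last exact/arcs.
by move=> k; apply: contra => /arcs /s_inj ->.
Qed.

Lemma perm_xor_cycle_graph f s c : perm_xor_map f s c -> single_orbit s ->
  is_cycle_graph f /\ num_neg_arcs f = weight c.
Proof.
move=> fF orb; pose p := invF fF.1.
have fE j i x b : f (setc x j b) i = (if p i == j then b else x (p i)) (+) c i.
  by rewrite (perm_xorE fF) ffunE.
have signed_arc b j i :
    [exists x, (f (setc x j true) i == b) && (f (setc x j false) i == ~~ b)]
    = (j == p i) && (c i == ~~ b).
  case: (eqVneq (p i) j) => [<-|pij] /=.
    apply/existsP/idP => [[x]|ci]; last exists pzero; rewrite !fE eqxx //.
      by case: b; case: (c i).
    by move: ci; case: b; case: (c i).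
  by apply/existsP => -[x]; rewrite !fE (negbTE pij); case: b; case: (x _); case: (c i).
have posE j i : pos_arc f j i = (j == p i) && ~~ c i.
  rewrite -eqbF_neg -(signed_arc true); apply: eq_existsb => x.
  by rewrite eqb_id eqbF_neg.
have negE j i : neg_arc f j i = (j == p i) && c i.
  rewrite -[c i]eqb_id -(signed_arc false); apply: eq_existsb => x.
  by rewrite eqbF_neg eqb_id.
split.
  split; first by move=> j i; rewrite posE negE; case: (j == p i); case: (c i).
  exists s; split => // j i.
  rewrite /Defs.arc posE negE -andb_orr orNb andbT.
  by split => [/eqP ->|->]; rewrite ?f_invF // /p invF_f.
rewrite /num_neg_arcs /weight.
rewrite (_ : [set q : V * V | neg_arc f q.1 q.2] = [set (p i, i) | i in [set i | c i]]).
  by rewrite card_imset // => a b [_ ->].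
apply/setP => -[j i]; rewrite inE /= negE.
apply/idP/imsetP => [/andP[/eqP -> ci]|[k]]; first by exists i; rewrite ?inE.
by rewrite inE => ck [-> ->]; rewrite eqxx ck.
Qed.

Lemma cycle_graph_parity_iff f b (i0 : V) :
  is_cycle_graph f /\ odd (num_neg_arcs f) = b <->
  [set conjugate f x | x in [set: point V]] = [set y | parity_on predT y == b]
  /\ self_dual f /\ non_expansive f.
Proof.
split.
  case=> /cycle_graph_perm_xor[s [c [fF orb]]] <-.
  have [_ ->] := perm_xor_cycle_graph fF orb.
  rewrite odd_weight (conjugate_image fF i0 orb).
  by split; [|split; [apply: perm_xor_self_dual fF | apply: perm_xor_non_expansive fF]].
case=> img [sd ne].
have [s [c fF]] := cube_isometry_perm_xor (self_dual_non_expansive_isometry sd ne).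
have orb := single_orbit_of_image fF img.
have [cyc ->] := perm_xor_cycle_graph fF orb; split => //.
have : conjugate f pzero \in [set conjugate f x | x in [set: point V]] by rewrite imset_f.
by rewrite img inE (parity_on_conjugate fF) // odd_weight => /eqP.
Qed.

End BooleanCube.

Theorem theorem9 (V : finType) (hV : 0 < #|V|) (f : point V -> point V) :
  (positive_circular f <-> even_self_dual f /\ non_expansive f) /\
  (negative_circular f <-> odd_self_dual f /\ non_expansive f).
Proof.
have [i0 _] := card_gt0P hV.
move: (cycle_graph_parity_iff f false i0) (cycle_graph_parity_iff f true i0).
rewrite /positive_circular /negative_circular /even_self_dual /odd_self_dual.
rewrite /even_map /odd_map even_pointsE odd_pointsE.
by case: (odd _) => /=; intuition congruence.
Qed.
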